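(* Let $\mathbf S_1,\mathbf S_2\in\mathrm{Sym}(m;2)$ and $\mathbf G_j=\mathbf G_U(\mathbf S_j)\mathbf H_N$ for $j=1,2$, and put $\mathbf G=\mathbf G_1^\dagger\mathbf G_2$ and $r=\mathrm{rank}(\mathbf S_1+\mathbf S_2)$. Then every column of $\mathbf G$ has exactly $2^r$ nonzero entries, each of modulus $2^{-r/2}$, and for each column the set of row indices $\mathbf b_1\in\mathbb F_2^m$ of its nonzero entries is a coset of the subspace $H=\mathrm{rs}(\mathbf S_1+\mathbf S_2)$ (row space over $\mathbb F_2$) in $\mathbb F_2^m$.
   Context: Fix $m\ge1$, $N=2^m$. $\mathrm{Sym}(m;2)$ is the set of symmetric binary $m\times m$ matrices; addition and rank are over $\mathbb F_2$. The standard basis of $\mathbb C^N=(\mathbb C^2)^{\otimes m}$ is $\{\mathbf e_{\mathbf v}=\mathbf e_{v_1}\otimes\cdots\otimes\mathbf e_{v_m}:\mathbf v\in\mathbb F_2^m\}$ and matrices on $\mathbb C^N$ are indexed by $\mathbb F_2^m\times\mathbb F_2^m$; $\dagger$ is conjugate transpose. $\mathbf G_U(\mathbf S)=\mathrm{diag}(i^{\mathbf v^T\mathbf S\mathbf v})_{\mathbf v\in\mathbb F_2^m}$, where $\mathbf v^T\mathbf S\mathbf v$ is computed in $\mathbb Z$ after lifting binary entries to $0,1$. $\mathbf H_N=\mathbf H_2^{\otimes m}=2^{-m/2}[(-1)^{\mathbf v^T\mathbf w}]_{\mathbf v,\mathbf w\in\mathbb F_2^m}$ with $\mathbf H_2=\frac1{\sqrt2}\begin{pmatrix}1&1\\1&-1\end{pmatrix}$.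 (The columns of $\mathbf G_U(\mathbf S)\mathbf H_N$ are the binary chirps with symmetric matrix $\mathbf S$.) *)

From HB Require Import structures.
From mathcomp Require Import all_boot all_order all_algebra algC.
Set Implicit Arguments. Unset Strict Implicit. Unset Printing Implicit Defensive.
Import Order.TTheory GRing.Theory Num.Theory.
Local Open Scope ring_scope.

(* Complex numbers: mathcomp's algebraic complex numbers algC (all entries
   considered are algebraic). Vectors of F_2^m are row vectors 'rV['F_2]_m. *)
Notation F2vec m := 'rV['F_2]_m.

(* Matrices on C^N, N = 2^m, indexed by F_2^m x F_2^m. *)
Definition cmat (m : nat) := F2vec m -> F2vec m -> algC.

Definition lift01 (x : 'F_2) : nat := nat_of_ord x.

(* v^T S v computed in Z (here in nat, all terms nonnegative) *)
Definition qform (m : nat) (S : 'M['F_2]_m) (v : F2vec m) : nat :=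
  (\sum_(i < m) \sum_(j < m) lift01 (v ord0 i) * lift01 (S i j) * lift01 (v ord0 j))%N.

Definition symF2 (m : nat) (S : 'M['F_2]_m) : bool := S^T == S.

Definition GU (m : nat) (S : 'M['F_2]_m) : cmat m :=
  fun v w => if v == w then 'i ^+ qform S v else 0.

Definition HN (m : nat) : cmat m :=
  fun v w => (sqrtC 2)^-1 ^+ m * (-1) ^+ lift01 ((v *m w^T) ord0 ord0).

Definition cmul (m : nat) (A B : cmat m) : cmat m :=
  fun v w => \sum_(u : F2vec m) A v u * B u w.

Definition cadj (m : nat) (A : cmat m) : cmat m := fun v w => (A w v)^*.
Arguments HN m : clear implicits.

From HB Require Import structures.
From mathcomp Require Import all_boot all_order all_algebra algC.
From mathcomp Require Import ring mxabelem.
Set Implicit Arguments. Unset Strict Implicit. Unset Printing Implicit Defensive.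
Import Order.TTheory GRing.Theory Num.Theory.
Local Open Scope ring_scope.

(* Write S = S1 + S2 and f(u) = conj(i^(u^T S1 u)) i^(u^T S2 u).  Expanding the
   product G = G1^dagger G2 gives G(b, w) = 2^-m W(b + w), where
   W(c) = sum_u (-1)^(u.c) f(u) is the Walsh transform of the phase f.
   The phase is "quadratic": lifting F_2-vectors to 0/1 integer vectors, the
   exponent is an integer quadratic form, and reducing its expansion modulo 4
   gives  f(u + v) = f(u) f(v) (-1)^(u S v^T),  with |f(u)| = 1.
   From this identity alone (for any symmetric S over F_2) we derive:
   |W(c)|^2 = 2^m sum_{t in ker S} (-1)^(t.c) f(t); on ker S the summand is a
   character, so this is 2^m |ker S| or 0 according as the character is
   trivial ("c is kernel-neutral").  Parseval (sum_c |W(c)|^2 = 4^m) then shows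
   that exactly 2^rank S vectors c are kernel-neutral; the neutral set is
   stable under translation by the row space of S, which has the same size,
   so it is a coset of that row space. *)

Lemma F2_cases (x : 'F_2) : x = 0 \/ x = 1.
Proof. by case: x => [[|[|k]] Hk]; [left|right|]; rewrite //; apply: val_inj. Qed.

Lemma F2_char : 2%N \in [pchar 'F_2].
Proof. exact: pchar_Fp. Qed.

Definition sgn (x : 'F_2) : algC := (-1) ^+ lift01 x.

Lemma sgn0 : sgn 0 = 1. Proof. by []. Qed.

Lemma sgn1 : sgn 1 = -1. Proof. by rewrite /sgn expr1. Qed.

Lemma sgnD (x y : 'F_2) : sgn (x + y) = sgn x * sgn y.
Proof.
by case: (F2_cases x) => ->; case: (F2_cases y) => ->;
  rewrite ?addr0 ?add0r ?sgn0 ?sgn1 ?mul1r ?mulr1 ?mulrNN ?mulr1 // addrr_pchar2 ?F2_char.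
Qed.

Lemma sgn_sqr (x : 'F_2) : sgn x * sgn x = 1.
Proof. by rewrite -sgnD addrr_pchar2 ?F2_char. Qed.

Lemma sgn_conj (x : 'F_2) : (sgn x)^* = sgn x.
Proof. by rewrite /sgn rmorphXn /= rmorphN1. Qed.

Lemma ipow_unit : ('i : algC) \is a GRing.unit.
Proof. by rewrite unitfE neq0Ci. Qed.

Lemma ipow_mod4 (z k : int) : ('i : algC) ^ (z + 4 * k) = 'i ^ z.
Proof.
have i4 : ('i : algC) ^ 4 = 1.
  by rewrite -[4]/(Posz (2 * 2)) -exprnP exprM sqrCi sqrrN expr1n.
by rewrite exprzDr ?ipow_unit // -exprz_exp i4 exp1rz mulr1.
Qed.

Lemma sgn_intr (z : int) : sgn z%:~R = 'i ^ (2 * z).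
Proof.
have -> : 2 * z = 2 * (z %% 2)%Z + 4 * (z %/ 2)%Z.
  by rewrite {1}(divz_eq z 2); ring.
rewrite ipow_mod4 {1}(divz_eq z 2) rmorphD rmorphM /=.
rewrite (_ : 2%:~R = 0 :> 'F_2) ?mulr0 ?add0r; last exact: val_inj.
have : (0 <= (z %% 2)%Z < 2) by rewrite modz_ge0 // ltz_pmod.
case: (z %% 2)%Z => [[|[|n]]|n] //= _.
by rewrite sgn1 -exprnP sqrCi.
Qed.

Lemma conj_ipow (z : int) : (('i : algC) ^ z)^* = 'i ^ (- z).
Proof. by rewrite rmorphXz ?ipow_unit //= conjCi -invCi exprz_inv. Qed.

Lemma ipow_unitary (z : int) : ('i : algC) ^ z * ('i ^ z)^* = 1.
Proof. by rewrite conj_ipow -exprzDr ?ipow_unit // subrr. Qed.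

Definition dot m (u v : F2vec m) : 'F_2 := (u *m v^T) 0 0.

Lemma dotC m (u v : F2vec m) : dot u v = dot v u.
Proof. by rewrite /dot !mxE; apply: eq_bigr => i _; rewrite !mxE mulrC. Qed.

Lemma dotDl m (u v w : F2vec m) : dot (u + v) w = dot u w + dot v w.
Proof. by rewrite /dot mulmxDl mxE. Qed.

Lemma dotDr m (u v w : F2vec m) : dot w (u + v) = dot w u + dot w v.
Proof. by rewrite dotC dotDl !(dotC w). Qed.

Lemma dot0r m (u : F2vec m) : dot u 0 = 0.
Proof. by rewrite /dot trmx0 mulmx0 mxE. Qed.

Lemma card_F2vec m : #|F2vec m| = (2 ^ m)%N.
Proof. by rewrite card_mx card_Fp // mul1n. Qed.

(* A function that is multiplicative along a translation t, with multiplier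
   g t <> 1, sums to zero over any t-invariant set: the sum is fixed by
   multiplication by g t. *)
Lemma sum_translate_eq0 (V : finZmodType) (R : idomainType) (P : pred V)
    (g : V -> R) (t : V) :
  (forall x, P (x + t) = P x) -> (forall x, g (x + t) = g x * g t) -> g t != 1 ->
  \sum_(x | P x) g x = 0.
Proof.
move=> Pt gt gt1; set s := \sum_(x | P x) g x.
have s_fix : s = s * g t.
  rewrite {1}/s (reindex_inj (addIr t)) /= mulr_suml.
  by apply: eq_big => x; rewrite ?Pt ?gt.
by move: s_fix => /eqP; rewrite -subr_eq0 -{1}[s]mulr1 -mulrBr mulf_eq0 subr_eq0
  [1 == _]eq_sym (negbTE gt1) orbF => /eqP.
Qed.

Lemma char_sum m (a : F2vec m) :
  \sum_(v : F2vec m) sgn (dot v a) = if a == 0 then (2 ^ m)%:R else 0.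
Proof.
have [->|a_neq0] := eqVneq a 0.
  by under eq_bigr do rewrite dot0r sgn0; rewrite sumr_const card_F2vec.
have [j aj] : exists j, a 0 j = 1.
  case: (pickP (fun j => a 0 j == 1)) => [j /eqP|a0]; first by exists j.
  case/eqP: a_neq0; apply/matrixP => i j; rewrite (ord1 i) mxE.
  by case: (F2_cases (a 0 j)) (a0 j) => ->.
apply: (@sum_translate_eq0 _ _ predT _ (delta_mx 0 j)) => // [v|].
  by rewrite dotDl sgnD.
by rewrite /dot -rowE !mxE aj sgn1 eq_sym -addr_eq0 -mulr2n pnatr_eq0.
Qed.

Section IntegerForm.
Variables (m : nat) (M : 'M[int]_m).
Hypothesis symM : M^T = M.

Definition ibil (x y : 'rV[int]_m) : int := (x *m M *m y^T) 0 0.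

Lemma ibilC x y : ibil x y = ibil y x.
Proof.
rewrite /ibil; have -> : y *m M *m x^T = (x *m M *m y^T)^T.
  by rewrite !trmx_mul trmxK symM mulmxA.
by rewrite [RHS]mxE.
Qed.

Lemma ibilDl x y z : ibil (x + y) z = ibil x z + ibil y z.
Proof. by rewrite /ibil !mulmxDl mxE. Qed.

Lemma ibilZl c x y : ibil (c *: x) y = c * ibil x y.
Proof. by rewrite /ibil -!scalemxAl mxE. Qed.

Lemma ibil_add x y : ibil (x + y) (x + y) = ibil x x + ibil y y + 2 * ibil x y.
Proof. by rewrite ibilDl ![ibil _ (x + y)]ibilC !ibilDl (ibilC y x); ring. Qed.

Lemma ibil_scale c x : ibil (c *: x) (c *: x) = c ^+ 2 * ibil x x.
Proof. by rewrite ibilZl ibilC ibilZl; ring. Qed.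

End IntegerForm.

Lemma ibilBmx m (A B : 'M[int]_m) (x y : 'rV[int]_m) :
  ibil (A - B) x y = ibil A x y - ibil B x y.
Proof. by rewrite /ibil mulmxBr mulmxBl !mxE. Qed.

Definition liftZ (x : 'F_2) : int := (lift01 x)%:Z.

Lemma liftZK (x : 'F_2) : (liftZ x)%:~R = x.
Proof. by case: (F2_cases x) => ->. Qed.

Lemma liftZD (x y : 'F_2) : liftZ (x + y) = liftZ x + liftZ y - 2 * (liftZ x * liftZ y).
Proof. by case: (F2_cases x) => ->; case: (F2_cases y) => ->. Qed.

Lemma map_liftZK p q (A : 'M['F_2]_(p, q)) : map_mx intr (map_mx liftZ A) = A.
Proof. by apply/matrixP => i j; rewrite !mxE liftZK. Qed.

Lemma qform_ibil m (S : 'M['F_2]_m) (u : F2vec m) :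
  (qform S u)%:Z = ibil (map_mx liftZ S) (map_mx liftZ u) (map_mx liftZ u).
Proof.
rewrite /qform /ibil mxE -natz natr_sum.
under eq_bigr do rewrite natr_sum.
rewrite exchange_big; apply: eq_bigr => j _.
rewrite !mxE mulr_suml; apply: eq_bigr => i _.
by rewrite !mxE !natrM !natz.
Qed.

Lemma ibil_reduce m (M : 'M[int]_m) (u v : F2vec m) :
  (u *m map_mx intr M *m v^T) 0 0 = (ibil M (map_mx liftZ u) (map_mx liftZ v))%:~R.
Proof.
have -> : v^T = map_mx intr (map_mx liftZ v)^T by rewrite -map_trmx map_liftZK.
by rewrite /ibil -{1}(map_liftZK u) -!map_mxM mxE.
Qed.

Section QuadraticPhase.
Variables (m : nat) (M : 'M[int]_m).
Hypothesis symM : M^T = M.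

Definition quad (u : F2vec m) : int := ibil M (map_mx liftZ u) (map_mx liftZ u).

(* The key identity: the phase i^quad is multiplicative up to the sign of the
   F_2 bilinear form of M mod 2, since quad (u + v) = quad u + quad v
   + 2 (lifted bilinear form) modulo 4. *)
Lemma ipow_quadD (u v : F2vec m) :
  'i ^ quad (u + v) = 'i ^ quad u * 'i ^ quad v * sgn ((u *m map_mx intr M *m v^T) 0 0).
Proof.
set a := map_mx liftZ u; set b := map_mx liftZ v; set p := \row_i (a 0 i * b 0 i).
have lift_add : map_mx liftZ (u + v) = a + b + (-2) *: p.
  by apply/matrixP => i j; rewrite (ord1 i) !mxE liftZD; ring.
have quad_add : quad (u + v) = quad u + quad v + 2 * ibil M a b
    + 4 * (ibil M p p - ibil M p (a + b)).
  rewrite /quad lift_add !ibil_add // ibil_scale // (ibilC symM (a + b)) ibilZl -/a -/b.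
  ring.
by rewrite quad_add ipow_mod4 ibil_reduce sgn_intr -!exprzDr ?ipow_unit.
Qed.

End QuadraticPhase.

Lemma card_kernel m n (A : 'M['F_2]_(m, n)) :
  #|[set t : F2vec m | t *m A == 0]| = (2 ^ (m - \rank A))%N.
Proof.
have -> : [set t : F2vec m | t *m A == 0] = rowg (kermx A).
  by apply/setP => t; rewrite inE mem_rowg; apply/eqP/sub_kermxP.
by rewrite card_rowg mxrank_ker card_Fp.
Qed.

Lemma card_coset m n (A : 'M['F_2]_(m, n)) (a : F2vec n) :
  #|[set c : F2vec n | (c - a <= A)%MS]| = (2 ^ \rank A)%N.
Proof.
have -> : [set c : F2vec n | (c - a <= A)%MS] = (fun c => c - a) @^-1: rowg A.
  by apply/setP => c; rewrite !inE ?mem_rowg.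
by rewrite card_preimset ?card_rowg ?card_Fp //; apply: addIr.
Qed.

Section WalshSpectrum.
Variables (m : nat) (S : 'M['F_2]_m).
Hypothesis symS : S^T = S.
Variable f : F2vec m -> algC.
Hypothesis fD : forall u v, f (u + v) = f u * f v * sgn ((u *m S *m v^T) 0 0).
Hypothesis f_unitary : forall u, f u * (f u)^* = 1.

Definition walsh (c : F2vec m) : algC := \sum_(u : F2vec m) sgn (dot u c) * f u.

(* c is kernel-neutral when the character t |-> (-1)^(t.c) f(t) of ker S is
   trivial; these are exactly the frequencies c with W(c) <> 0. *)
Definition ker_neutral (c : F2vec m) : bool :=
  [forall t : F2vec m, (t *m S == 0) ==> (sgn (dot t c) * f t == 1)].

Lemma f0 : f 0 = 1.
Proof.
have f0_neq0 : f 0 != 0.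
  by apply/eqP => f00; move: (f_unitary 0); rewrite f00 mul0r => /esym/eqP; rewrite oner_eq0.
move: (fD 0 0); rewrite addr0 !mul0mx mxE sgn0 mulr1 -{1}[f 0]mulr1.
by move/(mulfI f0_neq0).
Qed.

Lemma form_kernel (t v : F2vec m) : t *m S = 0 -> (v *m S *m t^T) 0 0 = 0.
Proof. by move=> tS; rewrite -mulmxA -{1}symS -trmx_mul tS trmx0 mulmx0 mxE. Qed.

(* Expanding |W(c)|^2 and substituting u = v + t, the sum over v is a
   character sum that vanishes unless t lies in ker S. *)
Lemma walsh_sqnorm_kernel c :
  walsh c * (walsh c)^* = (2 ^ m)%:R * \sum_(t | t *m S == 0) sgn (dot t c) * f t.
Proof.
rewrite /walsh rmorph_sum /= mulr_suml; under [LHS]eq_bigr do rewrite mulr_sumr.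
rewrite exchange_big /=.
transitivity (\sum_(v : F2vec m) \sum_(t : F2vec m)
                sgn (dot t c) * f t * sgn (dot v (t *m S))).
  apply: eq_bigr => v _; rewrite (reindex_inj (addIr v)) /=; apply: eq_bigr => t _.
  rewrite fD dotDl sgnD rmorphM /= sgn_conj.
  have -> : (t *m S *m v^T) 0 0 = dot v (t *m S) by rewrite dotC.
  have vv := sgn_sqr (dot v c); have fv := f_unitary v.
  transitivity (sgn (dot t c) * f t * sgn (dot v (t *m S)) *
                ((sgn (dot v c) * sgn (dot v c)) * (f v * (f v)^*))); first ring.
  by rewrite vv fv !mulr1.
rewrite exchange_big /=; under eq_bigr do rewrite -mulr_sumr char_sum.
rewrite mulr_sumr [RHS]big_mkcond; apply: eq_bigr => t _.
by case: ifP => _; rewrite ?mulr0 // mulrC.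
Qed.

(* On ker S the summand is a character, so its sum is |ker S| or 0. *)
Lemma kernel_sum c :
  \sum_(t | t *m S == 0) sgn (dot t c) * f t
    = if ker_neutral c then (2 ^ (m - \rank S))%:R else 0.
Proof.
case: (boolP (ker_neutral c)) => [/forallP neutral | /forallPn [t0]].
  rewrite (eq_bigr (fun _ => 1)) => [|t tS]; last by move: (neutral t); rewrite tS => /eqP.
  by rewrite -card_kernel -sum1_card natr_sum; apply: eq_bigl => t; rewrite inE.
rewrite negb_imply => /andP [t0S gt0].
apply: (sum_translate_eq0 (t := t0)) => // t.
  by rewrite mulmxDl (eqP t0S) addr0.
by rewrite dotDl sgnD fD form_kernel ?(eqP t0S) // sgn0 mulr1; ring.
Qed.

Lemma walsh_sqnorm c :
  walsh c * (walsh c)^* = if ker_neutral c then (2 ^ m * 2 ^ (m - \rank S))%:R else 0.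
Proof. by rewrite walsh_sqnorm_kernel kernel_sum; case: ifP; rewrite ?mulr0 // natrM. Qed.

(* Parseval: only t = 0 survives after summing the kernel formula over c. *)
Lemma walsh_parseval : \sum_(c : F2vec m) walsh c * (walsh c)^* = (2 ^ m * 2 ^ m)%:R.
Proof.
under eq_bigr do rewrite walsh_sqnorm_kernel.
rewrite -mulr_sumr exchange_big /=.
under eq_bigr => t _ do (under eq_bigr => c _ do rewrite dotC; rewrite -mulr_suml char_sum).
rewrite (bigD1 0) /=; last by rewrite mul0mx.
rewrite big1 => [|t /andP [_ /negbTE ->]]; last by rewrite mul0r.
by rewrite eqxx f0 addr0 mulr1 natrM.
Qed.

Lemma card_support : #|[set c : F2vec m | ker_neutral c]| = (2 ^ \rank S)%N.
Proof.
have split_m : (2 ^ m * 2 ^ m = 2 ^ m * 2 ^ (m - \rank S) * 2 ^ \rank S)%N.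
  by rewrite -mulnA -[in RHS]expnD subnK // rank_leq_row.
move: walsh_parseval; under eq_bigr do rewrite walsh_sqnorm.
rewrite -big_mkcond sumr_const -mulrnA => /eqP; rewrite eqr_nat split_m.
by rewrite eqn_pmul2l ?muln_gt0 ?expn_gt0 // cardsE => /eqP.
Qed.

(* Neutrality is invariant under translation by the row space of S, because
   (-1)^(t.(z S)) = 1 for t in ker S. *)
Lemma ker_neutral_translate a c : ker_neutral a -> (c - a <= S)%MS -> ker_neutral c.
Proof.
move=> /forallP neutral_a /submxP [z cz]; apply/forallP => t; apply/implyP => tS.
have := neutral_a t; rewrite tS /=.
have -> : c = a + z *m S by rewrite -cz addrC subrK.
have -> : dot t (a + z *m S) = dot t a.
  by rewrite dotDr (dotC t (z *m S)) /dot (form_kernel _ (eqP tS)) addr0.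
by [].
Qed.

(* The support is nonempty, contains a row-space coset, and has its size. *)
Lemma support_coset : exists a, forall c, ker_neutral c = (c - a <= S)%MS.
Proof.
have [a a_neutral] : exists a, ker_neutral a.
  have : (0 < #|[set c | ker_neutral c]|)%N by rewrite card_support expn_gt0.
  by case/card_gt0P => a; rewrite inE; exists a.
exists a.
have coset_sub : [set c | (c - a <= S)%MS] \subset [set c | ker_neutral c].
  by apply/subsetP => c; rewrite !inE; exact: ker_neutral_translate.
have coset_eq : [set c | (c - a <= S)%MS] = [set c | ker_neutral c].
  by apply/eqP; rewrite eqEcard coset_sub card_support card_coset leqnn.
by move=> c; move/setP/(_ c): coset_eq; rewrite !inE.
Qed.

End WalshSpectrum.

Lemma chirp_entry m (S : 'M['F_2]_m) (u b : F2vec m) :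
  cmul (GU S) (HN m) u b = 'i ^+ qform S u * ((sqrtC 2)^-1 ^+ m * sgn (dot u b)).
Proof.
rewrite /cmul (bigD1 u) //= big1 => [|v /negbTE vu]; last by rewrite /GU eq_sym vu mul0r.
by rewrite /GU eqxx addr0.
Qed.

Section ChirpGram.
Variables (m : nat) (S1 S2 : 'M['F_2]_m).
Hypotheses (sym1 : symF2 S1) (sym2 : symF2 S2).

Definition chirp_phase (u : F2vec m) : algC := ('i ^+ qform S1 u)^* * 'i ^+ qform S2 u.

Let M := map_mx liftZ S2 - map_mx liftZ S1.

Lemma chirp_phase_quad u : chirp_phase u = 'i ^ quad M u.
Proof.
rewrite /chirp_phase !exprnP conj_ipow -exprzDr ?ipow_unit // addrC.
by rewrite !qform_ibil /quad ibilBmx.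
Qed.

(* The chirp phase is quadratic with respect to S1 + S2 = S2 - S1 (mod 2). *)
Lemma chirp_phaseD u v :
  chirp_phase (u + v) = chirp_phase u * chirp_phase v * sgn ((u *m (S1 + S2) *m v^T) 0 0).
Proof.
have symM : M^T = M by rewrite /M linearB /= !map_trmx (eqP sym1) (eqP sym2).
have reduceM : map_mx intr M = S1 + S2.
  apply/matrixP => i j; rewrite /M map_mxB !map_liftZK !mxE.
  by rewrite GRing.subr_pchar2 ?F2_char // addrC.
by rewrite !chirp_phase_quad (ipow_quadD symM) reduceM.
Qed.

Lemma chirp_phase_unitary u : chirp_phase u * (chirp_phase u)^* = 1.
Proof. by rewrite chirp_phase_quad ipow_unitary. Qed.

Let G := cmul (cadj (cmul (GU S1) (HN m))) (cmul (GU S2) (HN m)).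

Lemma gram_walsh b w : G b w = ((2 ^ m)%:R)^-1 * walsh chirp_phase (b + w).
Proof.
have k_real : ((sqrtC 2)^-1 ^+ m : algC)^* = (sqrtC 2)^-1 ^+ m.
  by apply: geC0_conj; rewrite exprn_ge0 // invr_ge0 sqrtC_ge0 ler0n.
have k_sqr : ((sqrtC 2)^-1 ^+ m : algC) * (sqrtC 2)^-1 ^+ m = ((2 ^ m)%:R)^-1.
  by rewrite -exprMn -expr2 exprVn sqrtCK natrX exprVn.
rewrite /G {1}/cmul /cadj /walsh mulr_sumr; apply: eq_bigr => u _.
rewrite !chirp_entry !rmorphM /= k_real sgn_conj dotDr sgnD -k_sqr /chirp_phase.
by rewrite [LHS]mulrACA [X in _ * X = _]mulrACA [LHS]mulrC !mulrA.
Qed.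

Lemma gram_sqnorm b w :
  G b w * (G b w)^* = if ker_neutral (S1 + S2) chirp_phase (b + w)
                      then ((2 ^ \rank (S1 + S2)%R)%:R)^-1 else 0.
Proof.
have sym : (S1 + S2)^T = S1 + S2 by rewrite linearD /= (eqP sym1) (eqP sym2).
have two_pow_neq0 n : (2 ^ n)%:R != 0 :> algC by rewrite pnatr_eq0 expn_eq0.
rewrite gram_walsh rmorphM /= rmorphV ?unitfE // rmorph_nat.
transitivity (((2 ^ m)%:R)^-1 * ((2 ^ m)%:R)^-1 *
  (walsh chirp_phase (b + w) * (walsh chirp_phase (b + w))^*) : algC); first ring.
rewrite (walsh_sqnorm sym chirp_phaseD chirp_phase_unitary).
case: ifP => _; rewrite ?mulr0 //.
set A : algC := (2 ^ (m - \rank (S1 + S2)%R))%:R; set B : algC := (2 ^ \rank (S1 + S2)%R)%:R.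
have split_m : (2 ^ m)%:R = A * B by rewrite -natrM -expnD subnK // rank_leq_row.
rewrite natrM split_m -mulrA mulKf ?mulf_neq0 ?two_pow_neq0 //.
by rewrite invfM mulrAC mulVf ?mul1r ?two_pow_neq0.
Qed.

End ChirpGram.

Theorem corollary4 (m : nat) (S1 S2 : 'M['F_2]_m) :
  (0 < m)%N -> symF2 S1 -> symF2 S2 ->
  let G := cmul (cadj (cmul (GU S1) (HN m))) (cmul (GU S2) (HN m)) in
  let r := \rank (S1 + S2)%R in
  forall w : F2vec m,
    #|[set b : F2vec m | G b w != 0]| = (2 ^ r)%N /\
    (forall b : F2vec m, G b w != 0 -> `|G b w| = ((sqrtC 2) ^+ r)^-1) /\
    (exists a : F2vec m, forall b : F2vec m,
        (G b w != 0) = (b - a <= (S1 + S2)%R)%MS).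
Proof.
move=> _ sym1 sym2 G r w.
have symS : (S1 + S2)^T = S1 + S2 by rewrite linearD /= (eqP sym1) (eqP sym2).
have G_neq0 b : (G b w != 0) = ker_neutral (S1 + S2) (chirp_phase S1 S2) (b + w).
  by rewrite -mul_conjC_eq0 gram_sqnorm //; case: ifP; rewrite ?eqxx ?invr_eq0 ?pnatr_eq0 ?expn_eq0.
have [a coset] := support_coset symS (chirp_phaseD sym1 sym2) (chirp_phase_unitary S1 S2).
have G_coset b : (G b w != 0) = (b - (a - w) <= (S1 + S2)%R)%MS.
  by rewrite G_neq0 coset opprB addrA.
split; [|split]; last by exists (a - w).
  by rewrite -(card_coset (S1 + S2) (a - w)); apply: eq_card => b; rewrite !inE G_coset.
move=> b Gb; have := gram_sqnorm sym1 sym2 b w; rewrite -G_neq0 Gb -normCK => sq_norm.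
rewrite -[LHS]sqrCK ?normr_ge0 // sq_norm natrX -[in LHS](sqrtCK 2).
rewrite -exprM mulnC exprM -exprVn sqrCK //.
by rewrite invr_ge0 exprn_ge0 // sqrtC_ge0 ler0n.
Qed.
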